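(* Assume that $k\mapsto\widehat{\mathit{RID}}_j(k;\varepsilon,\mathcal{F},\ell,\mathcal{P}_n,\lambda)$ and $k\mapsto\mathit{RID}_j(k;\varepsilon,\mathcal{F},\ell,\mathcal{P}_n,\lambda)$ are strictly increasing in $k\in[\phi_{\min},\phi_{\max}]$. Then, as the number $B$ of bootstrap samples tends to infinity, the interquartile range of $\widehat{\mathit{RID}}_j$ converges in probability to the interquartile range of $\mathit{RID}_j$.
   Context: Let $\mathcal{D}^{(n)}=\{(X_i,Y_i)\}_{i=1}^n$ be an observed dataset with $X_i\in\mathbb{R}^p$, $Y_i\in\mathbb{R}$, and $\mathcal{P}_n$ its empirical distribution; a bootstrap dataset $\mathcal{D}^{(n)}_b\sim\mathcal{P}_n$ consists of $n$ i.i.d. draws from $\mathcal{P}_n$. Let $\mathcal{F}$ be a model class (for a finite class $|\cdot|$ denotes cardinality; for a continuous class, volume under a measure on the class), $\ell(f,\mathcal{D};\lambda)$ a bounded loss with hyperparameters $\lambda$, $\varepsilon>0$, and $\phi_j(f,\mathcal{D})\in[\phi_{\min},\phi_{\max}]$ a bounded variable importance measure for variable $j$. The Rashomon set is $\mathcal{R}^{\varepsilon}_{\mathcal{D}}=\{f\in\mathcal{F}:\ell(f,\mathcal{D};\lambda)\le\min_{f'\in\mathcal{F}}\ell(f',\mathcal{D};\lambda)+\varepsilon\}$. Define $\mathit{RID}_j(k;\varepsilon,\mathcal{F},\ell,\mathcal{P}_n,\lambda)=\mathbb{E}_{\mathcal{D}^{(n)}_b\sim\mathcal{P}_n}\left[\frac{|\{f\in\mathcal{R}^{\varepsilon}_{\mathcal{D}^{(n)}_b}:\phi_j(f,\mathcal{D}^{(n)}_b)\le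 k\}|}{|\mathcal{R}^{\varepsilon}_{\mathcal{D}^{(n)}_b}|}\right]$ and, for $B$ i.i.d. bootstrap datasets $\mathcal{D}^{(n)}_1,\dots,\mathcal{D}^{(n)}_B\sim\mathcal{P}_n$, $\widehat{\mathit{RID}}_j(k;\varepsilon,\mathcal{F},\ell,\mathcal{P}_n,\lambda)=\frac1B\sum_{b=1}^B\frac{|\{f\in\mathcal{R}^{\varepsilon}_{\mathcal{D}^{(n)}_b}:\phi_j(f,\mathcal{D}^{(n)}_b)\le k\}|}{|\mathcal{R}^{\varepsilon}_{\mathcal{D}^{(n)}_b}|}$. For a strictly increasing CDF $G$ on $[\phi_{\min},\phi_{\max}]$, its interquartile range is determined by the quartiles $k_{0.25},k_{0.75}$ with $G(k_{0.25})=0.25$, $G(k_{0.75})=0.75$, i.e. it is $[k_{0.25},k_{0.75}]$. *)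

From HB Require Import structures.
From mathcomp Require Import all_boot all_order all_algebra.
From mathcomp Require Import all_classical all_reals all_analysis.
Set Implicit Arguments. Unset Strict Implicit. Unset Printing Implicit Defensive.
Import Order.TTheory GRing.Theory Num.Theory.
Import numFieldNormedType.Exports.
Local Open Scope classical_set_scope.
Local Open Scope ring_scope.

Definition dataset (R : realType) (p n : nat) := 'I_n -> 'rV[R]_p * R.

(* A bootstrap dataset: n i.i.d. draws from the empirical distribution P_n,
   encoded by the sequence of drawn indices s : 'I_n -> 'I_n (uniformly
   distributed over {ffun 'I_n -> 'I_n}). *)
Definition boot_data (R : realType) (p n : nat) (D : dataset R p n)
  (s : {ffun 'I_n -> 'I_n}) : dataset R p n := fun i => D (s i).

Section Rashomon.
Variables (R : realType) (p n : nat) (d : measure_display) (F : measurableType d)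
  (Lam : Type).
Variables (mu : set F -> \bar R) (loss : F -> dataset R p n -> Lam -> R)
  (lam : Lam) (eps : R) (phi : 'I_p -> F -> dataset R p n -> R) (j : 'I_p).

(* Rashomon set R^eps_D; the "min" over F is the infimum of the (bounded) loss,
   which equals the minimum whenever the minimum is attained. *)
Definition rashomon (D : dataset R p n) : set F :=
  [set f | loss f D lam <= inf [set loss g D lam | g in [set: F]] + eps].

Definition rashomon_prop (D : dataset R p n) (k : R) : R :=
  fine (mu (rashomon D `&` [set f | phi j f D <= k])) / fine (mu (rashomon D)).

(* RID_j(k): expectation over D_b ~ P_n (exact average over all n^n index maps). *)
Definition RID (D : dataset R p n) (k : R) : R :=
  (\sum_(s : {ffun 'I_n -> 'I_n}) rashomon_prop (boot_data D s) k)
    / #|{: {ffun 'I_n -> 'I_n}}|%:R.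

Definition RIDhat (D : dataset R p n) (B : nat)
  (w : {ffun 'I_B -> {ffun 'I_n -> 'I_n}}) (k : R) : R :=
  (\sum_(b < B) rashomon_prop (boot_data D (w b)) k) / B%:R.
End Rashomon.

Definition bootProb (R : realType) (n B : nat)
  (E : {ffun 'I_B -> {ffun 'I_n -> 'I_n}} -> Prop) : R :=
  #|[set w : {ffun 'I_B -> {ffun 'I_n -> 'I_n}} | `[< E w >] ]|%:R
    / #|{: {ffun 'I_B -> {ffun 'I_n -> 'I_n}}}|%:R.

(* alpha-quantile of a CDF G on [a,b]: inf {k in [a,b] | alpha <= G k}.
   For strictly increasing G with G(k_alpha) = alpha this is exactly k_alpha. *)
Definition quantile (R : realType) (G : R -> R) (a b alpha : R) : R :=
  inf [set k | a <= k <= b /\ alpha <= G k].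

Definition strictly_increasing_on (R : realType) (G : R -> R) (a b : R) : Prop :=
  forall k1 k2, a <= k1 -> k1 < k2 -> k2 <= b -> G k1 < G k2.

(* At a fixed level k, RIDhat(k) is the average of B i.i.d. copies of the
   Rashomon proportion over a uniformly random bootstrap index map, whose mean
   is RID(k); Chebyshev's inequality bounds the probability that they differ by
   c > 0 by Var / (B c^2).  If the alpha-quantile of RIDhat exceeds the
   alpha-quantile q of RID by delta, then RIDhat(q + delta/2) < alpha
   < RID(q + delta/2), the second gap being positive because RID is strictly
   increasing; symmetrically at q - delta/2 when it falls below.  So a quartile
   moving by delta forces a deviation of fixed size at one of two fixed levels,
   an event of probability O(1/B). *)

From mathcomp Require Import all_boot all_order all_algebra.
From mathcomp Require Import all_classical all_reals all_analysis.
From mathcomp Require Import ring lra.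

Set Implicit Arguments.
Unset Strict Implicit.
Unset Printing Implicit Defensive.
Import Order.TTheory GRing.Theory Num.Theory.
Import numFieldNormedType.Exports.
Local Open Scope classical_set_scope.
Local Open Scope ring_scope.

Definition nondecreasing_on (R : realType) (G : R -> R) (a b : R) : Prop :=
  forall x y, a <= x -> x <= y -> y <= b -> G x <= G y.

Lemma strictly_increasing_on_nondecreasing (R : realType) (G : R -> R) a b :
  strictly_increasing_on G a b -> nondecreasing_on G a b.
Proof.
move=> Gincr x y ax; rewrite le_eqVlt => /predU1P[-> // | xy] yb.
exact/ltW/Gincr.
Qed.

Section Quantile.
Variables (R : realType) (a b alpha : R).

Lemma quantile_lbound (G : R -> R) :
  lbound [set k | a <= k <= b /\ alpha <= G k] a.
Proof. by move=> x [/andP[]]. Qed.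

Lemma quantile_itv (G : R -> R) : a <= b -> alpha <= G b ->
  a <= quantile G a b alpha <= b.
Proof.
move=> ab Gb; have bS : [set k | a <= k <= b /\ alpha <= G k] b.
  by rewrite /= ab lexx.
apply/andP; split; first by apply: lb_le_inf; [exists b | exact: quantile_lbound].
by apply: ge_inf bS; exists a; exact: quantile_lbound.
Qed.

Lemma lt_quantile (G : R -> R) k : a <= k -> k <= b ->
  k < quantile G a b alpha -> G k < alpha.
Proof.
move=> ak kb; apply: contraTT; rewrite -!leNgt => aGk.
by apply: ge_inf; [exists a; exact: quantile_lbound | rewrite /= ak kb].
Qed.

Lemma quantile_lt_nondecreasing (H : R -> R) k :
  nondecreasing_on H a b -> a <= b -> alpha <= H b ->
  quantile H a b alpha < k -> k <= b -> alpha <= H k.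
Proof.
move=> Hmono ab Hb /inf_lt[|y [/andP[ay yb] aHy] /ltW yk kb].
  by exists b; rewrite /= ab lexx.
exact: le_trans aHy (Hmono _ _ ay yk kb).
Qed.

Lemma quantile_lt (G : R -> R) k : strictly_increasing_on G a b ->
  a <= b -> alpha <= G b -> quantile G a b alpha < k -> k <= b -> alpha < G k.
Proof.
move=> Gincr ab Gb /inf_lt[|y [/andP[ay yb] aGy] yk kb].
  by exists b; rewrite /= ab lexx.
exact: le_lt_trans aGy (Gincr _ _ ay yk kb).
Qed.

Lemma quantile_shift_up_witness (G : R -> R) (delta : R) :
  a <= b -> alpha <= G b -> strictly_increasing_on G a b -> 0 < delta ->
  exists k c, 0 < c /\
  forall H : R -> R, alpha <= H b ->
    quantile G a b alpha + delta <= quantile H a b alpha -> c <= `|H k - G k|.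
Proof.
move=> ab Gb Gincr delta_gt0.
set q := quantile G a b alpha; have /andP[aq qb] : a <= q <= b := quantile_itv ab Gb.
have [kb|bk] := lerP (q + delta / 2) b; last first.
  (* vacuous: the quantile of [H] is at most [b] *)
  exists a, 1; split=> // H Hb qH; have /andP[_ qHb] := quantile_itv ab Hb.
  lra.
exists (q + delta / 2), (G (q + delta / 2) - alpha); split.
  by rewrite subr_gt0; apply: quantile_lt => //; rewrite -/q; lra.
move=> H Hb qH; have /andP[_ qHb] := quantile_itv ab Hb.
have : H (q + delta / 2) < alpha by apply: lt_quantile => //; lra.
by rewrite ler_normr => ?; apply/orP; right; lra.
Qed.

Lemma quantile_shift_down_witness (G : R -> R) (delta : R) :
  a <= b -> alpha <= G b -> strictly_increasing_on G a b -> 0 < delta ->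
  exists k c, 0 < c /\
  forall H : R -> R, alpha <= H b ->
    nondecreasing_on H a b ->
    quantile H a b alpha + delta <= quantile G a b alpha -> c <= `|H k - G k|.
Proof.
move=> ab Gb Gincr delta_gt0.
set q := quantile G a b alpha; have /andP[aq qb] : a <= q <= b := quantile_itv ab Gb.
have [ak|ka] := lerP a (q - delta / 2); last first.
  exists a, 1; split=> // H Hb _ qH; have /andP[aqH _] := quantile_itv ab Hb.
  lra.
exists (q - delta / 2), (alpha - G (q - delta / 2)); split.
  by rewrite subr_gt0; apply: lt_quantile => //; rewrite -/q; lra.
move=> H Hb Hmono qH; have /andP[aqH _] := quantile_itv ab Hb.
have : alpha <= H (q - delta / 2).
  by apply: quantile_lt_nondecreasing => //; lra.
by rewrite ler_normr => ?; apply/orP; left; lra.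
Qed.

Lemma quantile_shift_witness (G : R -> R) (delta : R) :
  a <= b -> alpha <= G b -> strictly_increasing_on G a b -> 0 < delta ->
  exists k1 k2 c, 0 < c /\
  forall H : R -> R, alpha <= H b ->
    nondecreasing_on H a b ->
    delta <= `|quantile H a b alpha - quantile G a b alpha| ->
    c <= `|H k1 - G k1| \/ c <= `|H k2 - G k2|.
Proof.
move=> ab Gb Gincr delta_gt0.
have [k1 [c1 [c1_gt0 up]]] := quantile_shift_up_witness ab Gb Gincr delta_gt0.
have [k2 [c2 [c2_gt0 down]]] := quantile_shift_down_witness ab Gb Gincr delta_gt0.
exists k1, k2, (Num.min c1 c2); split; first by rewrite lt_min c1_gt0.
move=> H Hb Hmono; rewrite ler_normr => /orP[] dH.
  by left; rewrite ge_min (up H Hb) //; lra.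
by right; rewrite ge_min (down H Hb Hmono) ?orbT //; lra.
Qed.

End Quantile.

Section IIDSampling.
Variables (R : realType) (S : finType).
Implicit Types (g h : S -> R) (B : nat).

(* [RID], [RIDhat] and [bootProb] are, up to conversion, [pop_mean],
   [sample_mean] and [iid_prob] for [S := {ffun 'I_n -> 'I_n}]. *)
Definition pop_mean g : R := (\sum_s g s) / #|{: S}|%:R.

Definition pop_var g : R := pop_mean (fun s => (g s - pop_mean g) ^+ 2).

Definition sample_mean B (w : {ffun 'I_B -> S}) g : R :=
  (\sum_(b < B) g (w b)) / B%:R.

Definition iid_prob B (E : {ffun 'I_B -> S} -> Prop) : R :=
  #|[set w : {ffun 'I_B -> S} | `[< E w >]]|%:R / #|{: {ffun 'I_B -> S}}|%:R.

Lemma pop_mean_eq_cst g (c : R) : (0 < #|S|)%N -> (forall s, g s = c) ->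
  pop_mean g = c.
Proof.
move=> S_gt0 gc; rewrite /pop_mean (eq_bigr _ (fun s _ => gc s)) sumr_const.
by rewrite -[c *+ _]mulr_natr mulfK // pnatr_eq0 -lt0n.
Qed.

Lemma sample_mean_eq_cst B (w : {ffun 'I_B -> S}) g (c : R) : (0 < B)%N ->
  (forall s, g s = c) -> sample_mean w g = c.
Proof.
move=> B_gt0 gc; rewrite /sample_mean (eq_bigr _ (fun b _ => gc (w b))).
by rewrite sumr_const card_ord -[c *+ _]mulr_natr mulfK // pnatr_eq0 -lt0n.
Qed.

Lemma iid_prob_ge0 B (E : {ffun 'I_B -> S} -> Prop) : 0 <= iid_prob E.
Proof. by rewrite divr_ge0. Qed.

Lemma iid_prob_le_or B (E E1 E2 : {ffun 'I_B -> S} -> Prop) :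
  (forall w, E w -> E1 w \/ E2 w) -> iid_prob E <= iid_prob E1 + iid_prob E2.
Proof.
move=> sub; rewrite /iid_prob -mulrDl ler_wpM2r ?invr_ge0 // -natrD ler_nat.
rewrite -cardUI; apply: leq_trans (leq_addr _ _).
apply/subset_leq_card/fintype.subsetP => w; rewrite inE => /asboolP/sub[] Ew.
  by apply/orP; left; rewrite inE; exact/asboolP.
by apply/orP; right; rewrite inE; exact/asboolP.
Qed.

Lemma sum_ffun_mul_centered h B (b b' : 'I_B) : \sum_s h s = 0 ->
  \sum_(w : {ffun 'I_B -> S}) h (w b) * h (w b') =
  if b' == b then #|S|%:R ^+ B.-1 * \sum_s h s ^+ 2 else 0.
Proof.
move=> h0.
(* The sum over all [w] factorises coordinatewise; for [b != b'] the factor at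
   [b] is [\sum_s h s = 0]. *)
pose F i (x : S) := (if i == b then h x else 1) * (if i == b' then h x else 1).
have -> : \sum_(w : {ffun 'I_B -> S}) h (w b) * h (w b') = \prod_i \sum_x F i x.
  rewrite bigA_distr_bigA; apply: eq_bigr => w _.
  by rewrite big_split /= -!big_mkcond !big_pred1_eq.
rewrite (bigD1 b) //= /F eqxx; case: eqVneq => [<-|neq_bb']; last first.
  by under eq_bigr do rewrite mulr1; rewrite h0 mul0r.
rewrite [X in _ * X](eq_bigr (fun=> #|S|%:R)) => [|i /negPf nib]; last first.
  by rewrite nib mulr1 sumr_const.
rewrite prodr_const cardC1 card_ord mulrC.
by congr (_ * _); apply: eq_bigr => x _; rewrite expr2.
Qed.

Lemma sum_ffun_sqr_centered h B : \sum_s h s = 0 ->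
  \sum_(w : {ffun 'I_B -> S}) (\sum_(b < B) h (w b)) ^+ 2 =
  B%:R * (#|S|%:R ^+ B.-1 * \sum_s h s ^+ 2).
Proof.
move=> h0; under eq_bigr do rewrite expr2 mulr_suml.
under eq_bigr do under eq_bigr do rewrite mulr_sumr.
rewrite exchange_big /=; under eq_bigr do rewrite exchange_big /=.
under eq_bigr do under eq_bigr do rewrite sum_ffun_mul_centered //.
under eq_bigr do rewrite -big_mkcond /= big_pred1_eq.
by rewrite sumr_const card_ord mulr_natl.
Qed.

Lemma sum_ffun_sample_mean_dev g B : (0 < #|S|)%N -> (0 < B)%N ->
  \sum_(w : {ffun 'I_B -> S}) (sample_mean w g - pop_mean g) ^+ 2 =
  #|S|%:R ^+ B * pop_var g / B%:R.
Proof.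
move=> S_gt0 B_gt0; set m := pop_mean g; pose h s := g s - m.
have N_neq0 : #|S|%:R != 0 :> R by rewrite pnatr_eq0 -lt0n.
have B_neq0 : B%:R != 0 :> R by rewrite pnatr_eq0 -lt0n.
have h0 : \sum_s h s = 0.
  by rewrite sumrB sumr_const -mulr_natr /m /pop_mean divfK ?subrr.
have dev w : sample_mean w g - m = (\sum_(b < B) h (w b)) / B%:R.
  by rewrite /sample_mean /h sumrB sumr_const card_ord -mulr_natr; field.
under eq_bigr do rewrite dev expr_div_n.
rewrite -mulr_suml sum_ffun_sqr_centered //.
have -> : pop_var g = (\sum_s h s ^+ 2) / #|S|%:R by [].
rewrite -[in #|S|%:R ^+ B](prednK B_gt0) [_ ^+ B.-1.+1]exprS; field.
by rewrite N_neq0 B_neq0.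
Qed.

Lemma iid_prob_sample_mean_dev_le g B (c : R) :
  (0 < #|S|)%N -> (0 < B)%N -> 0 < c ->
  iid_prob (fun w : {ffun 'I_B -> S} => c <= `|sample_mean w g - pop_mean g|)
  <= pop_var g / c ^+ 2 / B%:R.
Proof.
move=> S_gt0 B_gt0 c_gt0; rewrite /iid_prob; set bad := [set w | _].
have markov : #|bad|%:R * c ^+ 2 <=
    \sum_(w : {ffun 'I_B -> S}) (sample_mean w g - pop_mean g) ^+ 2.
  rewrite mulr_natl -sumr_const [leRHS](bigID (mem bad)) /= -[leLHS]addr0.
  apply: lerD; last by apply: sumr_ge0 => w _; exact: sqr_ge0.
  apply: ler_sum => w; rewrite inE => /asboolP dev.
  by rewrite -[leRHS]real_normK ?num_real // !expr2 ler_pM // ltW.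
rewrite sum_ffun_sample_mean_dev // in markov.
have N_gt0 : (0 : R) < #|S|%:R by rewrite ltr0n.
rewrite card_ffun card_ord natrX ler_pdivrMr ?exprn_gt0 //.
rewrite -(ler_pM2r (exprn_gt0 2 c_gt0)); apply: (le_trans markov).
suff -> : pop_var g / c ^+ 2 / B%:R * #|S|%:R ^+ B * c ^+ 2 =
  #|S|%:R ^+ B * pop_var g / B%:R by [].
by field; rewrite pnatr_eq0 -lt0n B_gt0 gt_eqF.
Qed.

Lemma iid_prob_sample_mean_dev_cvg0 g (c : R) : (0 < #|S|)%N -> 0 < c ->
  (fun B => iid_prob (fun w : {ffun 'I_B -> S} =>
     c <= `|sample_mean w g - pop_mean g|)) @ \oo --> 0.
Proof.
move=> S_gt0 c_gt0.
apply: (@squeeze_cvgr _ _ _ _ (fun=> 0) (fun B => pop_var g / c ^+ 2 / B%:R)).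
- near=> B; rewrite iid_prob_ge0 /=; apply: iid_prob_sample_mean_dev_le => //.
  by near: B; exists 1%N.
- exact: cvg_cst.
- rewrite -(mulr0 (pop_var g / c ^+ 2)); apply: cvgM; first exact: cvg_cst.
  apply/gtr0_cvgV0; last exact: cvgr_idn.
  by near=> B; rewrite ltr0n; near: B; exists 1%N.
Unshelve. all: by end_near.
Qed.

Lemma iid_prob_cvg0_sub_or (E E1 E2 : forall B, {ffun 'I_B -> S} -> Prop) :
  (forall B w, (0 < B)%N -> E B w -> E1 B w \/ E2 B w) ->
  (fun B => iid_prob (E1 B)) @ \oo --> 0 ->
  (fun B => iid_prob (E2 B)) @ \oo --> 0 ->
  (fun B => iid_prob (E B)) @ \oo --> 0.
Proof.
move=> sub E1_cvg0 E2_cvg0.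
apply: (@squeeze_cvgr _ _ _ _ (fun=> 0) (fun B => iid_prob (E1 B) + iid_prob (E2 B))).
- near=> B; rewrite iid_prob_ge0 /=; apply: iid_prob_le_or => w; apply: sub.
  by near: B; exists 1%N.
- exact: cvg_cst.
- by rewrite -[0]addr0; apply: cvgD.
Unshelve. all: by end_near.
Qed.

Lemma iid_prob_quantile_dev_cvg0 (G : R -> R)
    (H : forall B, {ffun 'I_B -> S} -> R -> R) (a b alpha delta : R) :
  a <= b -> alpha <= G b -> strictly_increasing_on G a b -> 0 < delta ->
  (forall B w, (0 < B)%N -> alpha <= H B w b) ->
  (forall B w, (0 < B)%N -> nondecreasing_on (H B w) a b) ->
  (forall k c, 0 < c ->
    (fun B => iid_prob (fun w : {ffun 'I_B -> S} => c <= `|H B w k - G k|))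
      @ \oo --> 0) ->
  (fun B => iid_prob (fun w : {ffun 'I_B -> S} =>
     delta <= `|quantile (H B w) a b alpha - quantile G a b alpha|)) @ \oo --> 0.
Proof.
move=> ab Gb Gincr delta_gt0 Hb Hmono H_cvg.
have [k1 [k2 [c [c_gt0 dev]]]] := quantile_shift_witness ab Gb Gincr delta_gt0.
apply: iid_prob_cvg0_sub_or (H_cvg k1 c c_gt0) (H_cvg k2 c c_gt0).
by move=> B w B_gt0; apply: dev; [exact: Hb | exact: Hmono].
Qed.

End IIDSampling.

Lemma measure_gt0_nonempty (R : realType) d (T : measurableType d)
    (mu : {measure set T -> \bar R}) (A : set T) :
  (0 < mu A)%E -> A !=set0.
Proof.
by move=> mu_gt0; apply/set0P; apply: contraTneq mu_gt0 => ->; rewrite measure0 ltxx.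
Qed.

Section BootstrapRashomon.
Variables (R : realType) (p n : nat) (d : measure_display) (F : measurableType d)
  (Lam : Type) (mu : set F -> \bar R) (loss : F -> dataset R p n -> Lam -> R)
  (lam : Lam) (eps : R) (phi : 'I_p -> F -> dataset R p n -> R) (j : 'I_p)
  (D : dataset R p n) (kmax : R).
Hypotheses (phi_le : forall f D', phi j f D' <= kmax)
  (mu_rashomon : forall s : {ffun 'I_n -> 'I_n},
     (0 < mu (rashomon loss lam eps (boot_data D s)) < +oo)%E).

Let rashomon_prop_boot_max s :
  rashomon_prop mu loss lam eps phi j (boot_data D s) kmax = 1.
Proof.
rewrite /rashomon_prop setIidl => [|f _]; last exact: phi_le.
by rewrite divff // gt_eqF // fine_gt0 // mu_rashomon.
Qed.

Lemma RID_max : RID mu loss lam eps phi j D kmax = 1.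
Proof.
apply: pop_mean_eq_cst rashomon_prop_boot_max.
by apply/card_gt0P; exists [ffun i => i].
Qed.

Lemma RIDhat_max B (w : {ffun 'I_B -> {ffun 'I_n -> 'I_n}}) : (0 < B)%N ->
  RIDhat mu loss lam eps phi j D w kmax = 1.
Proof. by move=> B_gt0; exact: sample_mean_eq_cst rashomon_prop_boot_max. Qed.

End BootstrapRashomon.

Theorem mainTheorem5 (R : realType) (p n : nat) (d : measure_display)
  (F : measurableType d) (mu : {measure set F -> \bar R}) (Lam : Type)
  (loss : F -> dataset R p n -> Lam -> R) (lam : Lam) (eps : R)
  (phi : 'I_p -> F -> dataset R p n -> R) (j : 'I_p) (phimin phimax : R)
  (D : dataset R p n) :
  0 < eps ->
  (exists M : R, forall f D', `|loss f D' lam| <= M) ->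
  (forall f D', phimin <= phi j f D' <= phimax) ->
  (forall s : {ffun 'I_n -> 'I_n},
      (0 < mu (rashomon loss lam eps (boot_data D s)) < +oo)%E) ->
  strictly_increasing_on (RID mu loss lam eps phi j D) phimin phimax ->
  (forall (B : nat) (w : {ffun 'I_B -> {ffun 'I_n -> 'I_n}}), (0 < B)%N ->
      strictly_increasing_on (RIDhat mu loss lam eps phi j D w) phimin phimax) ->
  forall delta : R, 0 < delta ->
    (fun B : nat => bootProb R (fun w : {ffun 'I_B -> {ffun 'I_n -> 'I_n}} =>
        delta <= `|quantile (RIDhat mu loss lam eps phi j D w) phimin phimax (1/4)
                   - quantile (RID mu loss lam eps phi j D) phimin phimax (1/4)|
     \/ delta <= `|quantile (RIDhat mu loss lam eps phi j D w) phimin phimax (3/4)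
                   - quantile (RID mu loss lam eps phi j D) phimin phimax (3/4)|))
    @ \oo --> (0 : R).
Proof.
move=> _ _ phi_bnd mu_rashomon RID_incr RIDhat_incr delta delta_gt0.
have phi_le f D' : phi j f D' <= phimax by case/andP: (phi_bnd f D').
have phim_le : phimin <= phimax.
  have [f _] := measure_gt0_nonempty (andP (mu_rashomon [ffun i => i])).1.
  by case/andP: (phi_bnd f (boot_data D [ffun i => i])); exact: le_trans.
have S_gt0 : (0 < #|{ffun 'I_n -> 'I_n}|)%N by apply/card_gt0P; exists [ffun i => i].
have RIDhat_mono B w (B_gt0 : (0 < B)%N) :=
  strictly_increasing_on_nondecreasing (RIDhat_incr B w B_gt0).
have RIDhat_cvg k c (c_gt0 : 0 < c) := iid_prob_sample_mean_dev_cvg0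
  (fun s => rashomon_prop mu loss lam eps phi j (boot_data D s) k) S_gt0 c_gt0.
apply: iid_prob_cvg0_sub_or; first by move=> B w _; exact: id.
all: apply: iid_prob_quantile_dev_cvg0 => //.
all: by [rewrite RID_max //; lra | move=> B w B_gt0; rewrite RIDhat_max //; lra].
Qed.
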